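(* For any distribution $P_{\bar Z\bar Y}$ on $\widehat{\mathcal S}\times\widehat{\mathcal X}$, any positive integer $M$ and any $\gamma>0$, there exists an $(M,d_s,d_x,\epsilon)$ code with \[\epsilon\le\mathbb P\big[g_{\bar Z\bar Y}(X,U)\ge\log\gamma\big]+e^{-M/\gamma},\] where $U$ is uniform on $[0,1]$ and independent of $X\sim P_X$, and \[g_{\bar Z\bar Y}(x,t)=\inf\big\{D(P_{ZY}\Vert P_{\bar Z\bar Y}):\ P_{ZY}\text{ a distribution on }\widehat{\mathcal S}\times\widehat{\mathcal X}\text{ with }\pi(x,Z,Y)\le t\text{ almost surely}\big\},\] with $\pi(x,z,y)=\mathbb P[\mathsf d_s(S,z)>d_s\text{ or }\mathsf d_x(x,y)>d_x\mid X=x]$, $S\sim P_{S|X=x}$.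
   Context: Let $\mathcal S,\mathcal X,\widehat{\mathcal S},\widehat{\mathcal X}$ be finite sets, $P_{SX}$ a distribution on $\mathcal S\times\mathcal X$, and $\mathsf d_s:\mathcal S\times\widehat{\mathcal S}\to[0,\infty)$, $\mathsf d_x:\mathcal X\times\widehat{\mathcal X}\to[0,\infty)$ distortion measures; fix $d_s,d_x\ge0$. An $(M,d_s,d_x,\epsilon)$ code is a random encoder $P_{U|X}:\mathcal X\to\{1,\dots,M\}$ and a random decoder $P_{ZY|U}:\{1,\dots,M\}\to\widehat{\mathcal S}\times\widehat{\mathcal X}$ (so $S-X-U-(Z,Y)$) such that $\mathbb P[\mathsf d_s(S,Z)>d_s\text{ or }\mathsf d_x(X,Y)>d_x]\le\epsilon$. $D(\cdot\Vert\cdot)$ is relative entropy; $\log$ and $\exp$ are to a common base. *)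

From HB Require Import structures.
From mathcomp Require Import all_boot all_order all_algebra.
From mathcomp Require Import all_classical all_reals all_analysis.
Set Implicit Arguments. Unset Strict Implicit. Unset Printing Implicit Defensive.
Import Order.TTheory GRing.Theory Num.Theory.
Local Open Scope ring_scope.
Local Open Scope classical_set_scope.

Definition is_dist (R : realType) (T : finType) (p : T -> R) : Prop :=
  (forall t, 0 <= p t) /\ \sum_(t : T) p t = 1.

Definition is_kernel (R : realType) (A B : finType) (k : A -> B -> R) : Prop :=
  forall a, is_dist (k a).

Definition relent (R : realType) (T : finType) (P Q : T -> R) : \bar R :=
  if [forall t, (P t != 0) ==> (Q t != 0)]
  then (\sum_(t : T) (if P t == 0 then 0 else P t * ln (P t / Q t)))%:E
  else +oo%E.

Definition marg_X (R : realType) (S X : finType) (P : S * X -> R) (x : X) : R :=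
  \sum_(s : S) P (s, x).

Definition excess (R : realType) (S X Sh Xh : finType)
  (dS : S -> Sh -> R) (dX : X -> Xh -> R) (Ds Dx : R)
  (s : S) (x : X) (z : Sh) (y : Xh) : R :=
  if (Ds < dS s z) || (Dx < dX x y) then 1 else 0.

(* pi(x,z,y) = P[ d_s(S,z) > Ds or d_x(x,y) > Dx | X = x ], S ~ P_{S|X=x}
   (conditional computed as P(s,x)/P_X(x); irrelevant when P_X(x)=0). *)
Definition pi_exc (R : realType) (S X Sh Xh : finType) (P : S * X -> R)
  (dS : S -> Sh -> R) (dX : X -> Xh -> R) (Ds Dx : R)
  (x : X) (z : Sh) (y : Xh) : R :=
  \sum_(s : S) (P (s, x) / marg_X P x) * excess dS dX Ds Dx s x z y.

Definition g_fun (R : realType) (S X Sh Xh : finType) (P : S * X -> R)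
  (dS : S -> Sh -> R) (dX : X -> Xh -> R) (Ds Dx : R)
  (Pbar : Sh * Xh -> R) (x : X) (t : R) : \bar R :=
  ereal_inf [set relent Q Pbar | Q in
    [set Q : Sh * Xh -> R | is_dist Q /\
       (forall zy : Sh * Xh, 0 < Q zy -> pi_exc P dS dX Ds Dx x zy.1 zy.2 <= t)]].

(* Error probability of the code (enc = P_{U|X}, dec = P_{ZY|U}). *)
Definition code_error (R : realType) (S X Sh Xh : finType) (M : nat)
  (P : S * X -> R) (dS : S -> Sh -> R) (dX : X -> Xh -> R) (Ds Dx : R)
  (enc : X -> 'I_M -> R) (dec : 'I_M -> Sh * Xh -> R) : R :=
  \sum_(sx : S * X) P sx * \sum_(u : 'I_M) enc sx.2 u *
     \sum_(zy : Sh * Xh) dec u zy * excess dS dX Ds Dx sx.1 sx.2 zy.1 zy.2.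

Definition is_code (R : realType) (S X Sh Xh : finType) (M : nat)
  (P : S * X -> R) (dS : S -> Sh -> R) (dX : X -> Xh -> R) (Ds Dx : R)
  (eps : R) : Prop :=
  exists (enc : X -> 'I_M -> R) (dec : 'I_M -> Sh * Xh -> R),
    is_kernel enc /\ is_kernel dec /\ code_error P dS dX Ds Dx enc dec <= eps.

Definition prob_g_ge (R : realType) (S X Sh Xh : finType) (P : S * X -> R)
  (dS : S -> Sh -> R) (dX : X -> Xh -> R) (Ds Dx : R)
  (Pbar : Sh * Xh -> R) (c : R) : \bar R :=
  (\sum_(x : X) (marg_X P x)%:E *
     (@lebesgue_measure R) (`[0%R, 1%R] `&`
        [set t : R | (c%:E <= g_fun P dS dX Ds Dx Pbar x t)%E]))%E.

From HB Require Import structures.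
From mathcomp Require Import all_boot all_order all_algebra.
From mathcomp Require Import all_classical all_reals all_analysis.
From mathcomp Require Import lra ring.
Set Implicit Arguments. Unset Strict Implicit. Unset Printing Implicit Defensive.
Import Order.TTheory GRing.Theory Num.Theory.
Local Open Scope ring_scope.

(* Random coding. Draw the M codewords i.i.d. from Pbar and encode x by the
   codeword c minimising pi(x, c).  For each x let t_x be the least level at
   which Pbar[pi(x, .) <= t] exceeds 1/gamma.  For t < t_x that set has
   Pbar-mass at most 1/gamma, and a distribution Q supported on a set A has
   D(Q || Pbar) >= - log Pbar(A); so g(x, t) >= log gamma on [0, t_x[, whose
   measure is t_x.  At t_x the mass exceeds 1/gamma, so the chance that no
   codeword lands in {pi(x, .) <= t_x} is at most (1 - 1/gamma)^M <= exp(-M/gamma).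
   The random code therefore has average error at most E[t_X] + exp(-M/gamma),
   and some fixed codebook does at least as well as the average. *)

Lemma ln_le_subr1 (R : realType) (y : R) : 0 < y -> ln y <= y - 1.
Proof. by move=> y0; have := @le_ln1Dx R (y - 1); rewrite addrCA subrr addr0; apply; lra. Qed.

Lemma mulr_ln_div_ge (R : realType) (q r a : R) : 0 < q -> 0 < r -> 0 < a ->
  q * (1 - ln a) - r / a <= q * ln (q / r).
Proof.
move=> q0 r0 a0; have qa0 : 0 < q * a by rewrite mulr_gt0.
have := ln_le_subr1 (divr_gt0 r0 qa0).
rewrite !ln_div ?lnM ?posrE // => le_ln.
have -> : r / a = q * (r / (q * a)) by field; rewrite ?gt_eqF.
have := ler_wpM2l (ltW q0) le_ln; rewrite !mulrBr !mulrDr mulr1; lra.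
Qed.

Lemma relent_ge_Nln (R : realType) (T : finType) (Q Pb : T -> R) (A : pred T) (a : R) :
  is_dist Q -> (forall t, 0 <= Pb t) -> (forall t, 0 < Q t -> A t) ->
  0 < a -> \sum_(t | A t) Pb t <= a -> ((- ln a)%:E <= relent Q Pb)%E.
Proof.
move=> [Q0 Q1] Pb0 suppQ a0 PbA.
rewrite /relent; case: ifP => [/forallP abs_cont|]; last by rewrite leey.
have Qpos t : Q t != 0 -> 0 < Q t by rewrite lt_def Q0 andbT.
have term t : Q t * (1 - ln a) - (if Q t == 0 then 0 else Pb t / a)
    <= (if Q t == 0 then 0 else Q t * ln (Q t / Pb t)).
  case: eqP => [->|/eqP Qt]; first by rewrite mul0r subr0.
  have /implyP/(_ Qt) Pbt := abs_cont t.
  by apply: mulr_ln_div_ge => //; [exact: Qpos | rewrite lt_def Pbt Pb0].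
rewrite lee_fin; apply: le_trans (ler_sum _ (fun t _ => term t)).
rewrite sumrB -mulr_suml Q1 mul1r.
suff : \sum_t (if Q t == 0 then 0 else Pb t / a) <= 1 by lra.
apply: (@le_trans _ _ (\sum_(t | A t) Pb t / a)); last first.
  by rewrite -mulr_suml ler_pdivrMr // mul1r.
rewrite [leRHS]big_mkcond /=; apply: ler_sum => t _.
case: eqP => [_|/eqP Qt]; first by case: ifP => _; rewrite // divr_ge0 // ltW.
by rewrite suppQ ?Qpos.
Qed.

Lemma expr1B_le_expRN (R : realType) (q : R) n : q <= 1 ->
  (1 - q) ^+ n <= expR (- (n%:R * q)).
Proof.
move=> q1; rewrite -mulrN expRM_natl.
by apply: lerXn2r; rewrite ?nnegrE ?expR_ge0 ?subr_ge0 // expR_ge1Dx.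
Qed.

Lemma exists_le_mean (R : realType) (I : finType) (w f : I -> R) :
  is_dist w -> exists i, f i <= \sum_j w j * f j.
Proof.
move=> [w0 w1]; have [i0 _] : exists i0 : I, true.
  case: (pickP (fun _ : I => true)) => [i0 _|none]; first by exists i0.
  by move: w1; rewrite big_pred0 // => /eqP; rewrite eq_sym oner_eq0.
exists (Order.arg_min i0 xpredT f); case: arg_minP => // i _ fmin.
rewrite -[f i]mul1r -w1 mulr_suml; apply: ler_sum => j _.
by rewrite ler_wpM2l // fmin.
Qed.

Lemma le_lebesgue_itv01I (R : realType) (T : set R) (t : R) : 0 <= t <= 1 ->
  (forall u, 0 <= u < t -> T u) ->
  (t%:E <= (@lebesgue_measure R) (`[0%R, 1%R] `&` T))%E.
Proof.
move=> /andP[t0 t1] sub.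
have -> : t%:E = lebesgue_measure [set` `[0, t[%R].
  rewrite lebesgue_measure_itv /= lte_fin; case: ltP => [_|t_le0]; first by rewrite sube0.
  by congr (_%:E); apply/eqP; rewrite eq_le t_le0 t0.
apply: le_outer_measure => u /=; rewrite in_itv /= => /andP[u0 ut]; split.
  by rewrite in_itv /= u0 (le_trans (ltW ut)).
by apply: sub; rewrite u0.
Qed.

Section RandomCodebook.
Variables (R : realType) (Z : finType) (n : nat).
Implicit Types (p F : Z -> R) (t : R) (cb : {ffun 'I_n -> Z}).

Lemma sum_ffun_prod F : \sum_(cb : {ffun 'I_n -> Z}) \prod_i F (cb i) = (\sum_z F z) ^+ n.
Proof. by rewrite -(bigA_distr_bigA (fun _ => F)) prodr_const card_ord. Qed.

Lemma arg_min_codeword_le p t i0 cb : (forall z, p z <= 1) -> 0 <= t ->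
  p (cb [arg min_(i < i0) p (cb i)]%O)
    <= t + \prod_i (if p (cb i) <= t then 0 else 1).
Proof.
move=> p1 t0; case: arg_minP => // imin _ pmin.
case: (pickP (fun i => p (cb i) <= t)) => [j pj | none].
  by rewrite (bigD1 j) //= pj mul0r addr0 (le_trans (pmin j _)).
rewrite big1; last by move=> i _; rewrite none.
by rewrite (le_trans (p1 _)) // lerDr.
Qed.

Variable Pb : Z -> R.
Hypothesis hPb : is_dist Pb.

Lemma is_dist_iid : is_dist (fun cb => \prod_i Pb (cb i)).
Proof.
have [Pb0 Pb1] := hPb; split; last by rewrite sum_ffun_prod Pb1 expr1n.
by move=> cb; apply: prodr_ge0 => i _.
Qed.

Lemma expect_arg_min_le p t i0 : (forall z, p z <= 1) -> 0 <= t ->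
  \sum_(cb : {ffun 'I_n -> Z}) (\prod_i Pb (cb i)) * p (cb [arg min_(i < i0) p (cb i)]%O)
    <= t + (1 - \sum_(z | p z <= t) Pb z) ^+ n.
Proof.
move=> p1 t0; have [_ Pb1] := hPb; have [w0 w1] := is_dist_iid.
pose miss z := Pb z * (if p z <= t then 0 else 1).
have miss_prob : \sum_z miss z = 1 - \sum_(z | p z <= t) Pb z.
  rewrite -[in RHS]Pb1 [in RHS](bigID (fun z => p z <= t) xpredT) /=.
  rewrite addrAC subrr add0r [RHS]big_mkcond.
  by apply: eq_bigr => z _; rewrite /miss; case: ifP; rewrite ?mulr0 ?mulr1.
apply: le_trans
  (ler_sum _ (fun cb _ => ler_wpM2l (w0 cb) (arg_min_codeword_le i0 cb p1 t0))) _.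
under eq_bigr do rewrite mulrDr -big_split /=.
by rewrite big_split /= -mulr_suml w1 mul1r (sum_ffun_prod miss) miss_prob.
Qed.

Lemma exists_threshold p c : 0 <= c -> (forall z, 0 <= p z <= 1) ->
  exists t, [/\ 0 <= t <= 1,
    forall u, u < t -> \sum_(z | p z <= u) Pb z <= c &
    \sum_(z | p z <= t) Pb z = 1 \/ c < \sum_(z | p z <= t) Pb z].
Proof.
move=> c0 p01; have [_ Pb1] := hPb.
pose F u := \sum_(z | p z <= u) Pb z.
pose K z := c < F (p z).
pose t := \big[Num.min/1]_(z | K z) p z.
have t_le z : K z -> t <= p z by move=> Kz; rewrite /t (bigD1 z) //= ge_min lexx.
exists t; split.
- rewrite /t; apply: (big_ind (fun v => 0 <= v <= 1)) => //; first by rewrite ler01 lexx.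
  by move=> x y hx hy; rewrite /Num.min; case: ifP.
- move=> u ut; rewrite leNgt; apply/negP => cF.
  case: (pickP (fun z => p z <= u)) => [z1 z1u|none]; last first.
    by move: cF; rewrite big_pred0 // ltNge c0.
  case: (@arg_maxP _ _ _ z1 (fun z => p z <= u) p z1u) => zs zsu zmax.
  have Kzs : K zs.
    rewrite /K /F (eq_bigl (fun z => p z <= u)) // => z.
    by apply/idP/idP => [/le_trans/(_ zsu)|/zmax].
  by move: (le_lt_trans (le_trans (t_le _ Kzs) zsu) ut); rewrite ltxx.
- have : t = 1 \/ exists2 z, K z & t = p z.
    rewrite /t; apply: (big_ind (fun v => v = 1 \/ exists2 z, K z & v = p z)).
    + by left.
    + by move=> x y hx hy; rewrite /Num.min; case: ifP.
    + by move=> z Kz; right; exists z.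
  case=> [->|[z Kz ->]]; [left | by right].
  by rewrite -[RHS]Pb1; apply: eq_bigl => z; have /andP[_ ->] := p01 z.
Qed.

Lemma exists_threshold_expect_arg_min_le p c i0 : 0 <= c -> (forall z, 0 <= p z <= 1) ->
  exists t, [/\ 0 <= t <= 1,
    forall u, u < t -> \sum_(z | p z <= u) Pb z <= c &
    \sum_(cb : {ffun 'I_n -> Z}) (\prod_i Pb (cb i)) * p (cb [arg min_(i < i0) p (cb i)]%O)
      <= t + expR (- (n%:R * c))].
Proof.
move=> c0 p01; have [Pb0 Pb1] := hPb.
have [t [t01 below mass]] := exists_threshold c0 p01.
exists t; split => //; have /andP[t0 _] := t01.
apply: le_trans (expect_arg_min_le i0 _ t0) _; first by move=> z; case/andP: (p01 z).
rewrite lerD2l; case: mass => [->|cq].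
  have n0 : (0 < n)%N := leq_ltn_trans (leq0n i0) (ltn_ord i0).
  by rewrite subrr expr0n gtn_eqF ?expR_ge0.
apply: le_trans (expr1B_le_expRN _ _) _.
  rewrite -Pb1 [leRHS](bigID (fun z => p z <= t)) /= lerDl.
  by apply: sumr_ge0 => z _; apply: Pb0.
by rewrite ler_expR lerN2 ler_wpM2l // ltW.
Qed.
End RandomCodebook.

Lemma is_dist_delta (R : realType) (I : finType) (a : I) :
  is_dist (fun u => ((u == a)%:R : R)).
Proof.
split=> [u|]; first by rewrite ler0n.
by rewrite (bigD1 a) //= eqxx big1 ?addr0 // => u /negbTE ->.
Qed.

Lemma sum_delta_mul (R : realType) (I : finType) (a : I) (F : I -> R) :
  \sum_u (u == a)%:R * F u = F a.
Proof. by rewrite (bigD1 a) //= eqxx mul1r big1 ?addr0 // => u /negbTE ->; rewrite mul0r. Qed.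

Lemma is_dist_marg_X (R : realType) (S X : finType) (P : S * X -> R) :
  is_dist P -> is_dist (marg_X P).
Proof.
move=> [P0 P1]; split=> [x|]; first exact: sumr_ge0.
by rewrite /marg_X exchange_big pair_bigA -P1; apply: eq_bigr => -[s x].
Qed.

Section Coding.
Variables (R : realType) (S X Sh Xh : finType) (P : S * X -> R).
Variables (dS : S -> Sh -> R) (dX : X -> Xh -> R) (Ds Dx : R).
Hypothesis P0 : forall sx, 0 <= P sx.
Local Notation pi x zy := (pi_exc P dS dX Ds Dx x zy.1 zy.2).

Lemma marg_X_ge0 x : 0 <= marg_X P x.
Proof. exact: sumr_ge0. Qed.

Lemma pi_exc_itv x z y : 0 <= pi_exc P dS dX Ds Dx x z y <= 1.
Proof.
have exc01 s : 0 <= excess dS dX Ds Dx s x z y <= 1.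
  by rewrite /excess; case: ifP; rewrite ?lexx ?ler01.
have cond0 s : 0 <= P (s, x) / marg_X P x by rewrite divr_ge0 ?marg_X_ge0.
apply/andP; split.
  by apply: sumr_ge0 => s _; rewrite mulr_ge0 //; case/andP: (exc01 s).
apply: (@le_trans _ _ (\sum_s P (s, x) / marg_X P x)).
  apply: ler_sum => s _; rewrite -[leRHS]mulr1 ler_wpM2l //.
  by case/andP: (exc01 s).
rewrite -mulr_suml; have [->|m_neq0] := eqVneq (marg_X P x) 0.
  by rewrite invr0 mulr0 ler01.
by rewrite mulfV.
Qed.

Lemma code_error_delta M (e : X -> 'I_M) (cb : 'I_M -> Sh * Xh) :
  code_error P dS dX Ds Dx (fun x u => (u == e x)%:R) (fun u zy => (zy == cb u)%:R)
  = \sum_x marg_X P x * pi x (cb (e x)).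
Proof.
rewrite /code_error; under eq_bigr do rewrite !sum_delta_mul.
transitivity (\sum_x \sum_s P (s, x) * excess dS dX Ds Dx s x (cb (e x)).1 (cb (e x)).2).
  by rewrite exchange_big pair_bigA; apply: eq_bigr => -[s x].
apply: eq_bigr => x _; rewrite /pi_exc mulr_sumr.
have [m0|m_neq0] := eqVneq (marg_X P x) 0.
  have Px0 s : P (s, x) = 0 by apply: (psumr_eq0P (fun s _ => P0 (s, x)) m0).
  by apply: eq_bigr => s _; rewrite Px0 !mul0r mulr0.
by apply: eq_bigr => s _; field.
Qed.

Lemma random_coding_is_code M (w : {ffun 'I_M -> Sh * Xh} -> R)
    (enc : {ffun 'I_M -> Sh * Xh} -> X -> 'I_M) (b : X -> R) :
  is_dist w ->
  (forall x, \sum_(cb : {ffun 'I_M -> Sh * Xh}) w cb * pi x (cb (enc cb x)) <= b x) ->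
  is_code M P dS dX Ds Dx (\sum_x marg_X P x * b x).
Proof.
move=> hw bound.
pose err (cb : {ffun 'I_M -> Sh * Xh}) := \sum_x marg_X P x * pi x (cb (enc cb x)).
have [cb le_mean] := exists_le_mean err hw.
exists (fun x u => (u == enc cb x)%:R), (fun u zy => (zy == cb u)%:R).
split; first by move=> x; apply: is_dist_delta.
split; first by move=> u; apply: is_dist_delta.
rewrite code_error_delta; apply: le_trans le_mean _.
under eq_bigr do rewrite mulr_sumr; rewrite exchange_big; apply: ler_sum => x _.
under eq_bigr do rewrite mulrCA; rewrite -mulr_sumr.
by rewrite ler_wpM2l ?marg_X_ge0 ?bound.
Qed.

Variable Pbar : Sh * Xh -> R.
Hypothesis Pbar0 : forall zy, 0 <= Pbar zy.

Lemma ln_le_g_fun x t gamma : 0 < gamma ->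
  \sum_(zy | pi x zy <= t) Pbar zy <= gamma^-1 ->
  ((ln gamma)%:E <= g_fun P dS dX Ds Dx Pbar x t)%E.
Proof.
move=> g0 mass; apply: le_ereal_inf_tmp => _ [Q [hQ suppQ] <-].
rewrite -[ln gamma]opprK -lnV ?posrE //.
by apply: (relent_ge_Nln hQ Pbar0 suppQ); rewrite ?invr_gt0.
Qed.

Lemma le_prob_g_ge c (tf : X -> R) : (forall x, 0 <= tf x <= 1) ->
  (forall x u, 0 <= u < tf x -> (c%:E <= g_fun P dS dX Ds Dx Pbar x u)%E) ->
  ((\sum_x marg_X P x * tf x)%:E <= prob_g_ge P dS dX Ds Dx Pbar c)%E.
Proof.
move=> tf01 g_ge; rewrite /prob_g_ge -sumEFin; apply: lee_sum => x _.
rewrite EFinM lee_wpmul2l ?lee_fin ?marg_X_ge0 //.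
by apply: le_lebesgue_itv01I => // u; apply: g_ge.
Qed.
End Coding.

Theorem theorem2 (R : realType) (S X Sh Xh : finType)
  (P : S * X -> R) (dS : S -> Sh -> R) (dX : X -> Xh -> R) (Ds Dx : R)
  (hP : is_dist P) (hdS : forall s z, 0 <= dS s z) (hdX : forall x y, 0 <= dX x y)
  (hDs : 0 <= Ds) (hDx : 0 <= Dx)
  (Pbar : Sh * Xh -> R) (hPbar : is_dist Pbar)
  (M : nat) (hM : (0 < M)%N) (gamma : R) (hgamma : 0 < gamma) :
  exists eps : R,
    is_code M P dS dX Ds Dx eps /\
    (eps%:E <= prob_g_ge P dS dX Ds Dx Pbar (ln gamma)
               + (expR (- (M%:R / gamma)))%:E)%E.
Proof.
have [[P0 _] [Pbar0 _]] := (hP, hPbar).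
have [_ mX1] := is_dist_marg_X hP.
pose i0 : 'I_M := Ordinal hM.
have g_inv0 : 0 <= gamma^-1 by rewrite invr_ge0 ltW.
have [tf tfP] := choice (fun x => exists_threshold_expect_arg_min_le hPbar i0 g_inv0
  (fun zy => pi_exc_itv dS dX Ds Dx P0 x zy.1 zy.2)).
exists (\sum_x marg_X P x * (tf x + expR (- (M%:R / gamma)))); split.
  pose enc (cb : {ffun 'I_M -> Sh * Xh}) x :=
    [arg min_(i < i0) pi_exc P dS dX Ds Dx x (cb i).1 (cb i).2]%O.
  apply: (random_coding_is_code P0 (enc := enc) (is_dist_iid M hPbar)) => x.
  by have [_ _] := tfP x.
under eq_bigr do rewrite mulrDr.
rewrite big_split /= -mulr_suml mX1 mul1r EFinD leeD2r //.
apply: (le_prob_g_ge P0) => x; first by have [] := tfP x.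
move=> u /andP[_ u_lt]; apply: (ln_le_g_fun Pbar0) => //.
by have [_ below _] := tfP x; apply: below.
Qed.
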